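(* Let $1\le p\le\infty$, $\mathbb{D}=\{z\in\mathbb{C}:|z|<1\}$, $a\in\mathbb{D}$, and $T_a(z)=\frac{z-a}{1-\overline{a}z}$. Then $T_a:(\mathbb{D},b_{\mathbb{D},p})\to(\mathbb{D},b_{\mathbb{D},p})$ is $L$-bilipschitz with $L=\frac{1+|a|}{1-|a|}$, i.e. for all $z_1,z_2\in\mathbb{D}$, \[ \frac{1-|a|}{1+|a|}\,b_{\mathbb{D},p}(z_1,z_2)\le b_{\mathbb{D},p}(T_a(z_1),T_a(z_2))\le\frac{1+|a|}{1-|a|}\,b_{\mathbb{D},p}(z_1,z_2). \]
   Context: For $z_1,z_2\in\mathbb{D}$ and $1\le p<\infty$, $b_{\mathbb{D},p}(z_1,z_2)=\sup_{z\in\partial\mathbb{D}}\frac{|z_1-z_2|}{\sqrt[p]{|z_1-z|^p+|z-z_2|^p}}$, and $b_{\mathbb{D},\infty}(z_1,z_2)=\sup_{z\in\partial\mathbb{D}}\frac{|z_1-z_2|}{\max\{|z_1-z|,|z_2-z|\}}$. *)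

From mathcomp Require Import all_boot all_order all_algebra.
From mathcomp Require Import all_classical all_reals all_analysis.
From mathcomp Require Import complex.
Set Implicit Arguments. Unset Strict Implicit. Unset Printing Implicit Defensive.
Import Order.TTheory GRing.Theory Num.Theory.
Local Open Scope ring_scope.
Local Open Scope classical_set_scope.

Section Defs.
Variable R : realType.

Definition cabs (z : R[i]) : R := ComplexField.Normc.normc z.

Definition unit_disk : set R[i] := [set z | cabs z < 1].
Definition unit_circle : set R[i] := [set z | cabs z = 1].

Definition bD_fin (r : R) (z1 z2 : R[i]) : R :=
  sup [set cabs (z1 - z2) /
            powR (powR (cabs (z1 - z) ) r + powR (cabs (z - z2)) r) r^-1
      | z in unit_circle].

Definition bD_inf (z1 z2 : R[i]) : R :=
  sup [set cabs (z1 - z2) / Num.max (cabs (z1 - z)) (cabs (z2 - z))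
      | z in unit_circle].

(* b_{D,p} for p in [1, +oo] given as an extended real; the -oo case is junk *)
Definition bD (p : \bar R) (z1 z2 : R[i]) : R :=
  match p with
  | r%:E => bD_fin r z1 z2
  | +oo%E => bD_inf z1 z2
  | -oo%E => 0
  end.

Definition mobT (a z : R[i]) : R[i] := (z - a) / (1 - (conjc a) * z).
End Defs.

From mathcomp Require Import all_boot all_order all_algebra.
From mathcomp Require Import all_classical all_reals all_analysis.
From mathcomp Require Import complex.
From mathcomp Require Import ring lra.
Set Implicit Arguments. Unset Strict Implicit. Unset Printing Implicit Defensive.
Import Order.TTheory GRing.Theory Num.Theory.
Local Open Scope ring_scope.

(* Both b_{D,p} and b_{D,oo} are suprema over the unit circle of
   |z1 - z2| / M(|z1 - z|, |z - z2|) for a mean M that is positively homogeneous,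
   monotone and dominates its first argument.  T_a maps the circle onto itself and
   |T_a z - T_a w| = (1 - |a|^2) |z - w| / (|1 - conj(a) z| |1 - conj(a) w|), where
   each denominator lies in [1 - |a|, 1 + |a|] on the closed disk.  Homogeneity and
   monotonicity of M then show that T_a shrinks each quotient by at most the factor
   (1 - |a|) / (1 + |a|); taking suprema gives the lower bound, and applying it to the
   inverse map T_{-a} gives the upper one. *)

Section ComplexModulus.
Variable R : realType.
Implicit Types z w b : R[i].

Lemma cabs_ge0 z : 0 <= cabs z.
Proof. by case: z => x y; exact: sqrtr_ge0. Qed.

Lemma cabsM z w : cabs (z * w) = cabs z * cabs w.
Proof. exact: ComplexField.Normc.normcM. Qed.

Lemma cabsV z : cabs z^-1 = (cabs z)^-1.
Proof. exact: ComplexField.Normc.normcV. Qed.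

Lemma cabsN z : cabs (- z) = cabs z.
Proof. exact: normcN. Qed.

Lemma cabs1 : cabs (1 : R[i]) = 1.
Proof. exact: ComplexField.Normc.normc1. Qed.

Lemma cabs_conj z : cabs (conjc z) = cabs z.
Proof. by case: z => x y; rewrite /cabs /= sqrrN. Qed.

Lemma cabsB z w : cabs (z - w) = cabs (w - z).
Proof. by rewrite -cabsN opprB. Qed.

Lemma ler_cabsD z w : cabs (z + w) <= cabs z + cabs w.
Proof. exact: le_normcD. Qed.

Lemma lerB_cabs z w : cabs z - cabs w <= cabs (z - w).
Proof. have := ler_cabsD (z - w) w; rewrite subrK; lra. Qed.

Lemma cabs_1subM_bounds b z : cabs b < 1 -> cabs z <= 1 ->
  1 - cabs b <= cabs (1 - b * z) <= 1 + cabs b.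
Proof.
move=> hb hz; have hb0 := cabs_ge0 b; have hz0 := cabs_ge0 z.
have hbz : cabs (b * z) <= cabs b by rewrite cabsM; nra.
have := lerB_cabs 1 (b * z); have := ler_cabsD 1 (- (b * z)).
rewrite cabs1 cabsN => hle hge; apply/andP; split; lra.
Qed.

Lemma cabs_1subM_gt0 b z : cabs b < 1 -> cabs z <= 1 -> 0 < cabs (1 - b * z).
Proof. by move=> hb /(cabs_1subM_bounds hb)/andP[+ _]; lra. Qed.

Lemma subr1M_neq0 b z : cabs b < 1 -> cabs z <= 1 -> 1 - b * z != 0.
Proof.
move=> hb /(cabs_1subM_gt0 hb); apply: contraTneq => ->.
by rewrite /cabs ComplexField.Normc.normc0 ltxx.
Qed.

Lemma mobius_sqr_identity (a z : R[i]) :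
  cabs (1 - conjc a * z) ^+ 2 - cabs (z - a) ^+ 2 =
  (1 - cabs a ^+ 2) * (1 - cabs z ^+ 2).
Proof.
case: a => p q; case: z => x y.
by rewrite /cabs /= !sqr_sqrtr ?addr_ge0 ?sqr_ge0 //; ring.
Qed.

End ComplexModulus.

Section Mobius.
Variables (R : realType) (a : R[i]).
Hypothesis a_in_disk : cabs a < 1.
Implicit Types z w : R[i].

Let conja_in_disk : cabs (conjc a) < 1.
Proof. by rewrite cabs_conj. Qed.

Lemma mobiusB z w : cabs z <= 1 -> cabs w <= 1 ->
  mobT a z - mobT a w =
  (z - w) * (1 - conjc a * a) / ((1 - conjc a * z) * (1 - conjc a * w)).
Proof.
move=> hz hw; rewrite /mobT; field.
by rewrite !subr1M_neq0.
Qed.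

Lemma cabs_mobiusB z w : cabs z <= 1 -> cabs w <= 1 ->
  cabs (mobT a z - mobT a w) =
  cabs (z - w) * cabs (1 - conjc a * a) /
    (cabs (1 - conjc a * z) * cabs (1 - conjc a * w)).
Proof. by move=> hz hw; rewrite mobiusB // !(cabsM, cabsV). Qed.

Lemma mobius_circle z : cabs z = 1 -> cabs (mobT a z) = 1.
Proof.
move=> hz; have hden : 0 < cabs (1 - conjc a * z).
  by apply: cabs_1subM_gt0; rewrite ?hz.
suff e : cabs (1 - conjc a * z) = cabs (z - a).
  by rewrite /mobT cabsM cabsV -e divff // gt_eqF.
have := mobius_sqr_identity a z; rewrite hz expr1n subrr mulr0 => /eqP.
by rewrite subr_eq0 eqrXn2 ?cabs_ge0 // => /eqP.
Qed.

Lemma mobius_disk z : cabs z < 1 -> cabs (mobT a z) < 1.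
Proof.
move=> hz; have hden := cabs_1subM_gt0 conja_in_disk (ltW hz).
rewrite /mobT cabsM cabsV ltr_pdivrMr // mul1r.
have ha0 := cabs_ge0 a; have hz0 := cabs_ge0 z; have hza0 := cabs_ge0 (z - a).
have : 0 < (1 - cabs a ^+ 2) * (1 - cabs z ^+ 2).
  by apply: mulr_gt0; rewrite subr_gt0 expr_lt1 ?cabs_ge0.
rewrite -mobius_sqr_identity; nra.
Qed.

Lemma mobiusK z : cabs z <= 1 -> mobT (- a) (mobT a z) = z.
Proof.
move=> hz; have n1 := subr1M_neq0 conja_in_disk hz.
have n2 := subr1M_neq0 conja_in_disk (ltW a_in_disk).
rewrite /mobT [conjc (- a)]raddfN; field.
by rewrite n1 /= (_ : _ - _ = 1 - conjc a * a) //; ring.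
Qed.

End Mobius.

Section CircleQuotient.
Variables (R : realType) (M : R -> R -> R).
Hypothesis M_homo : forall c x y : R, 0 < c -> 0 <= x -> 0 <= y ->
  M (c * x) (c * y) = c * M x y.
Hypothesis M_mono : forall x y x' y' : R, 0 <= x -> 0 <= y -> x <= x' -> y <= y' ->
  M x y <= M x' y'.
Hypothesis M_ge : forall x y : R, 0 <= x -> 0 <= y -> x <= M x y.
Implicit Types z w : R[i].

Definition bquot z1 z2 z := cabs (z1 - z2) / M (cabs (z1 - z)) (cabs (z - z2)).
Definition bsup z1 z2 := sup [set bquot z1 z2 z | z in @unit_circle R].

Lemma M_gt0 (x y : R) : 0 < x -> 0 <= y -> 0 < M x y.
Proof. by move=> x0 y0; apply: lt_le_trans x0 (M_ge (ltW x0) y0). Qed.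

Lemma mean_quot_homo (c t x y : R) : 0 < c -> 0 <= x -> 0 <= y ->
  c * t / M (c * x) (c * y) = t / M x y.
Proof.
by move=> c0 x0 y0; rewrite M_homo // invfM mulrACA divff ?mul1r // gt_eqF.
Qed.

Lemma ler_mean_quot (s u v w d d1 d2 : R) :
  0 <= s -> 0 < u <= 1 + s -> 0 < v <= 1 + s -> 1 - s <= w -> 0 <= w ->
  0 <= d -> 0 < d1 -> 0 <= d2 ->
  (1 - s) / (1 + s) * (d / M d1 d2) <= w * d / M (v * d1) (u * d2).
Proof.
move=> s0 /andP[u0 us] /andP[v0 vs] ws w0 d0 d10 d20.
have M0 : 0 < M d1 d2 by apply: M_gt0.
have M'0 : 0 < M (v * d1) (u * d2).
  by apply: M_gt0; [exact: mulr_gt0 | exact: mulr_ge0 (ltW u0) d20].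
have hM : M (v * d1) (u * d2) <= (1 + s) * M d1 d2.
  rewrite -M_homo //; [|lra|exact: ltW].
  by apply: M_mono; rewrite ?mulr_ge0 ?ler_wpM2r // ltW.
apply: (@le_trans _ _ (w * d / ((1 + s) * M d1 d2))).
  rewrite (_ : _ * (d / _) = (1 - s) * d / ((1 + s) * M d1 d2)); last first.
    by field; rewrite !gt_eqF //; lra.
  apply: ler_wpM2r; last exact: ler_wpM2r.
  by rewrite invr_ge0 mulr_ge0 ?(ltW M0) //; lra.
apply: ler_wpM2l; first exact: mulr_ge0.
by rewrite lef_pV2 ?posrE ?mulr_gt0 //; lra.
Qed.

Lemma bquot_le z1 z2 z : cabs z1 < 1 -> cabs z = 1 ->
  bquot z1 z2 z <= cabs (z1 - z2) / (1 - cabs z1).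
Proof.
move=> h1 hz; have := lerB_cabs z z1; rewrite hz -cabsB => hd.
have hM := M_ge (cabs_ge0 (z1 - z)) (cabs_ge0 (z - z2)).
apply: ler_wpM2l; first exact: cabs_ge0.
by rewrite lef_pV2 ?posrE; lra.
Qed.

Lemma bquot_mobius_ge a z1 z2 z :
  cabs a < 1 -> cabs z1 < 1 -> cabs z2 < 1 -> cabs z = 1 ->
  (1 - cabs a) / (1 + cabs a) * bquot z1 z2 z <=
  bquot (mobT a z1) (mobT a z2) (mobT a z).
Proof.
move=> ha h1 h2 hz; have ha' : cabs (conjc a) < 1 by rewrite cabs_conj.
have h1' := ltW h1; have h2' := ltW h2; have hz' : cabs z <= 1 by rewrite hz.
rewrite /bquot !cabs_mobiusB //.
have hK := cabs_1subM_gt0 ha' (ltW ha).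
have := cabs_1subM_bounds ha' h1'; have := cabs_1subM_bounds ha' h2'.
have := cabs_1subM_bounds ha' hz'; rewrite !cabs_conj.
set K := cabs (1 - conjc a * a).
set u := cabs (1 - conjc a * z1); set v := cabs (1 - conjc a * z2).
set w := cabs (1 - conjc a * z).
move=> /andP[hw _] /andP[hv0 hv] /andP[hu0 hu].
have ha0 := cabs_ge0 a.
have [u0 v0 w0] : [/\ 0 < u, 0 < v & 0 < w] by split; lra.
set c := K / (u * v * w).
have c0 : 0 < c by rewrite divr_gt0 // !mulr_gt0.
rewrite (_ : cabs (z1 - z) * K / (u * w) = c * (v * cabs (z1 - z))); last first.
  by rewrite /c; field; rewrite !gt_eqF.
rewrite (_ : cabs (z - z2) * K / (w * v) = c * (u * cabs (z - z2))); last first.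
  by rewrite /c; field; rewrite !gt_eqF.
rewrite (_ : cabs (z1 - z2) * K / (u * v) = c * (w * cabs (z1 - z2))); last first.
  by rewrite /c; field; rewrite !gt_eqF.
rewrite mean_quot_homo ?mulr_ge0 ?cabs_ge0 ?(ltW u0) ?(ltW v0) //.
apply: ler_mean_quot; rewrite ?cabs_ge0 ?u0 ?v0 ?(ltW w0) //.
by have := lerB_cabs z z1; rewrite hz -cabsB; lra.
Qed.

Lemma bsup_mobius_ge a z1 z2 : cabs a < 1 -> cabs z1 < 1 -> cabs z2 < 1 ->
  (1 - cabs a) / (1 + cabs a) * bsup z1 z2 <= bsup (mobT a z1) (mobT a z2).
Proof.
move=> ha h1 h2; have ha0 := cabs_ge0 a.
have k0 : 0 < (1 - cabs a) / (1 + cabs a) by apply: divr_gt0; lra.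
rewrite -ler_pdivlMl //; apply: ge_sup.
  by exists (bquot z1 z2 1), 1 => //; exact: cabs1.
move=> _ [z hz <-]; rewrite ler_pdivlMl //.
apply: le_trans (bquot_mobius_ge ha h1 h2 hz) _.
apply: ub_le_sup; last by exists (mobT a z) => //; exact: mobius_circle.
exists (cabs (mobT a z1 - mobT a z2) / (1 - cabs (mobT a z1))).
by move=> _ [w hw <-]; apply: bquot_le => //; exact: mobius_disk.
Qed.

Lemma bsup_mobius_bilipschitz a z1 z2 :
  cabs a < 1 -> cabs z1 < 1 -> cabs z2 < 1 ->
  (1 - cabs a) / (1 + cabs a) * bsup z1 z2 <= bsup (mobT a z1) (mobT a z2) /\
  bsup (mobT a z1) (mobT a z2) <= (1 + cabs a) / (1 - cabs a) * bsup z1 z2.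
Proof.
move=> ha h1 h2; split; first exact: bsup_mobius_ge.
have ha0 := cabs_ge0 a.
have k0 : 0 < (1 - cabs a) / (1 + cabs a) by apply: divr_gt0; lra.
have hNa : cabs (- a) < 1 by rewrite cabsN.
have := bsup_mobius_ge hNa (mobius_disk ha h1) (mobius_disk ha h2).
by rewrite !mobiusK ?(ltW h1) ?(ltW h2) // cabsN -ler_pdivlMl // invf_div.
Qed.

End CircleQuotient.

Section PowerMean.
Variables (R : realType) (r : R).
Hypothesis r_gt0 : 0 < r.

Definition pmean (x y : R) := powR (powR x r + powR y r) r^-1.

Lemma powRK (x : R) : 0 <= x -> powR (powR x r) r^-1 = x.
Proof. by move=> x0; rewrite -powRrM divff ?powRr1 // gt_eqF. Qed.

Lemma pmean_homo (c x y : R) : 0 < c -> 0 <= x -> 0 <= y ->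
  pmean (c * x) (c * y) = c * pmean x y.
Proof.
move=> c0 x0 y0; rewrite /pmean !powRM ?(ltW c0) // -mulrDr.
by rewrite powRM ?addr_ge0 ?powR_ge0 // powRK // ltW.
Qed.

Lemma pmean_mono (x y x' y' : R) : 0 <= x -> 0 <= y -> x <= x' -> y <= y' ->
  pmean x y <= pmean x' y'.
Proof.
rewrite /pmean => x0 y0 xx' yy'; have r0 := ltW r_gt0.
apply: ge0_ler_powR; rewrite ?invr_ge0 ?nnegrE ?addr_ge0 ?powR_ge0 //.
by apply: lerD; apply: ge0_ler_powR; rewrite ?nnegrE //; lra.
Qed.

Lemma pmean_ge (x y : R) : 0 <= x -> 0 <= y -> x <= pmean x y.
Proof.
move=> x0 y0; rewrite /pmean -{1}(powRK x0).
apply: ge0_ler_powR; rewrite ?invr_ge0 ?(ltW r_gt0) ?nnegrE ?addr_ge0 ?powR_ge0 //.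
by rewrite lerDl powR_ge0.
Qed.

End PowerMean.

Lemma bD_finE (R : realType) (r : R) (z1 z2 : R[i]) :
  bD_fin r z1 z2 = bsup (pmean r) z1 z2.
Proof. by []. Qed.

Lemma bD_infE (R : realType) (z1 z2 : R[i]) :
  bD_inf z1 z2 = bsup Num.max z1 z2.
Proof.
rewrite /bD_inf /bsup; congr sup; apply: eq_imagel => z _.
by rewrite /bquot (cabsB z2 z).
Qed.

Unset Implicit Arguments.

Theorem theorem4p2 (R : realType) (p : \bar R) (a : R[i]) :
  (1%:E <= p)%E -> cabs a < 1 ->
  forall z1 z2 : R[i], cabs z1 < 1 -> cabs z2 < 1 ->
    (1 - cabs a) / (1 + cabs a) * bD p z1 z2 <= bD p (mobT a z1) (mobT a z2)
    /\ bD p (mobT a z1) (mobT a z2) <= (1 + cabs a) / (1 - cabs a) * bD p z1 z2.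
Proof.
move=> hp ha z1 z2 h1 h2.
case: p hp => [r | | ] /=; rewrite ?leeNy_eq // => hp.
- have r_gt0 : 0 < r by move: hp; rewrite lee_fin; lra.
  rewrite !bD_finE; apply: bsup_mobius_bilipschitz => //.
  + exact: pmean_homo.
  + exact: pmean_mono.
  + exact: pmean_ge.
- rewrite !bD_infE; apply: bsup_mobius_bilipschitz => //.
  + by move=> c x y c0 _ _; rewrite maxr_pMr // ltW.
  + by move=> x y x' y' _ _; exact: le_max2.
  + by move=> x y _ _; rewrite le_max lexx.
Qed.
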